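(* Let $b\ge2$ and $e\ge2$ be integers. For every integer $h\ge1$ there are infinitely many $e$-power $b$-happy numbers of height exactly $h$.
   Context: For integers $b>1$, $e>1$ and a positive integer $n=\sum_{i=0}^{r} d_i b^i$ written in base $b$ (digits $0\le d_i\le b-1$), the $e$-power base-$b$ happy function is $S_{e,b}(n)=\sum_{i=0}^{r} d_i^e$. A positive integer $n$ is $e$-power $b$-happy if $S_{e,b}^{\ell}(n)=1$ for some $\ell\ge 1$ ($S^\ell$ the $\ell$-fold iterate). The height of $1$ is $0$, and the height of a happy number $n>1$ is the least $\ell\ge1$ with $S_{e,b}^{\ell}(n)=1$. *)

From mathcomp Require Import all_boot.
Set Implicit Arguments. Unset Strict Implicit. Unset Printing Implicit Defensive.

(* Base-b digits of n, least significant first; fuel n suffices since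
   each step divides by b >= 2.  For b <= 1 the result is meaningless
   but the theorem assumes b >= 2. *)
Fixpoint digits_fuel (fuel b n : nat) : seq nat :=
  match fuel with
  | 0 => [::]
  | fuel'.+1 => if n == 0 then [::] else (n %% b) :: digits_fuel fuel' b (n %/ b)
  end.

Definition digits (b n : nat) : seq nat := digits_fuel n b n.

Definition S (e b n : nat) : nat := \sum_(d <- digits b n) d ^ e.

Definition happy (e b n : nat) : Prop :=
  0 < n /\ exists l, 0 < l /\ iter l (S e b) n = 1.

Definition happy_height (e b n h : nat) : Prop :=
  happy e b n /\
  ((n = 1 /\ h = 0) \/
   (1 < n /\ 0 < h /\ iter h (S e b) n = 1 /\
    forall l, 0 < l -> l < h -> iter l (S e b) n <> 1)).

From mathcomp Require Import all_boot.
From mathcomp Require Import zify.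

(* The base-b repunit [repunit x] has x digits equal to 1, so
   [S (repunit x * b ^ j) = x] for every j.  Hence any number of height h
   is the image of arbitrarily large numbers, which have height h + 1;
   starting from 1, induction on h gives every height. *)

Section HappyHeights.

Variables b e : nat.
Hypothesis b_gt1 : 1 < b.

Lemma digits_fuel_enough f n : n <= f -> digits_fuel f b n = digits b n.
Proof.
suff fuel_succ g m : m <= g -> digits_fuel g.+1 b m = digits_fuel g b m.
  rewrite /digits; elim: f => [|f IH] n_le; first by have -> : n = 0 by lia.
  have [n_le_f | n_eq] := leqP n f; last by have -> : n = f.+1 by lia.
  by rewrite fuel_succ ?IH.
elim: g m => [|g IH] m m_le; first by have -> : m = 0 by lia.
have digits_fuelS f' k : digits_fuel f'.+1 b k =
    if k == 0 then [::] else k %% b :: digits_fuel f' b (k %/ b) by [].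
rewrite digits_fuelS [RHS]digits_fuelS; case: posnP => [_ // | m_gt0].
rewrite IH //; have := ltn_Pdiv b_gt1 m_gt0; lia.
Qed.

Lemma digits_pos n : 0 < n -> digits b n = n %% b :: digits b (n %/ b).
Proof.
case: n => [//|n] _; rewrite /digits /= digits_fuel_enough //.
by have := ltn_Pdiv b_gt1 (ltn0Sn n); lia.
Qed.

Lemma S0 : S e b 0 = 0.
Proof. by rewrite /S /digits big_nil. Qed.

Lemma S_pos n : 0 < n -> S e b n = (n %% b) ^ e + S e b (n %/ b).
Proof. by move=> n_gt0; rewrite /S digits_pos // big_cons. Qed.

Lemma iter_S0 l : iter l (S e b) 0 = 0.
Proof. by elim: l => //= l ->; exact: S0. Qed.

Fixpoint repunit k := if k is k'.+1 then repunit k' * b + 1 else 0.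

Lemma S_repunit k : S e b (repunit k) = k.
Proof.
elim: k => [|k IH] /=; first exact: S0.
rewrite S_pos ?addn1 // -addn1 modnMDl modn_small // divnMDl ?(ltnW b_gt1) //.
by rewrite divn_small // addn0 exp1n IH add1n.
Qed.

Hypothesis e_gt0 : 0 < e.

Lemma S_mulb n : S e b (n * b) = S e b n.
Proof.
case: n => [|n]; first by rewrite mul0n.
rewrite S_pos ?muln_gt0 ?(ltnW b_gt1) // modnMl mulnK ?(ltnW b_gt1) //.
by rewrite exp0n.
Qed.

Lemma S_repunit_shift k j : S e b (repunit k * b ^ j) = k.
Proof.
elim: j => [|j IH]; first by rewrite muln1 S_repunit.
by rewrite expnSr mulnA S_mulb.
Qed.

(* Height h in the sense of the paper, but with [n = 1] excluded for
   h > 0 by the condition at l = 0. *)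
Definition exact_height h n :=
  iter h (S e b) n = 1 /\ forall l, l < h -> iter l (S e b) n <> 1.

Lemma exact_height_succ h x N :
  exact_height h x -> exists2 n, N < n & exact_height h.+1 n.
Proof.
move=> [hit_h miss_lt_h].
have x_gt0 : 0 < x by case: x hit_h {miss_lt_h} => //; rewrite iter_S0.
have N_lt_pow : N.+1 < b ^ N.+1 by apply: ltn_expl.
have rep_gt0 : 0 < repunit x by case: x x_gt0 {hit_h miss_lt_h} => //= x _; lia.
exists (repunit x * b ^ N.+1); first by nia.
split; first by rewrite iterSr S_repunit_shift.
case=> [|l] l_lt /=; first by nia.
by rewrite -iterS iterSr S_repunit_shift //; apply: miss_lt_h.
Qed.

Lemma exact_height1 : exact_height 0 1.
Proof. by split=> // l; rewrite ltn0. Qed.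

Lemma exact_height_unbounded h N : exists2 n, N < n & exact_height h.+1 n.
Proof.
elim: h N => [|h IH] N; first exact: exact_height_succ exact_height1.
by have [x _ /exact_height_succ] := IH 0; apply.
Qed.

Lemma exact_height_happy_height h n :
  0 < h -> 0 < n -> exact_height h n -> happy_height e b n h.
Proof.
move=> h_gt0 n_gt0 [hit_h miss_lt_h].
split; first by split; last by exists h.
right; split; first by have /= := miss_lt_h 0 h_gt0; lia.
by split=> //; split=> // l _; exact: miss_lt_h.
Qed.

End HappyHeights.

Theorem mainTheorem6 (b e : nat) (hb : 2 <= b) (he : 2 <= e) :
  forall h : nat, 1 <= h ->
    forall N : nat, exists n : nat, N < n /\ happy_height e b n h.
Proof.
case=> [// | h] _ N.
have e_gt0 : 0 < e by apply: leq_trans he.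
have [n N_lt_n n_height] := @exact_height_unbounded b e hb e_gt0 h N.
exists n; split=> //.
by apply: exact_height_happy_height => //; apply: leq_ltn_trans N_lt_n.
Qed.
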